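(* If $G$ and $H$ are two connected graphs with $\mathrm{toi}(G)=\mathrm{toi}(H)=3$, then $\mathrm{toi}(G \square H) \geq 4$. Furthermore, equality holds when $G=H=K_3$.
   Context: $\mathrm{toi}(G)$ is the maximum $t$ such that $G$ contains a totally odd strong immersion of $K_t$ (an injective map of $V(K_t)$ into $V(G)$ with pairwise edge-disjoint odd paths joining each pair of terminals, no terminal being an interior vertex of any path). $G\square H$ is the Cartesian product: vertex set $V(G)\times V(H)$, with $(g_1,h_1)\sim(g_2,h_2)$ iff ($g_1=g_2$ and $h_1h_2\in E(H)$) or ($h_1=h_2$ and $g_1g_2\in E(G)$). *)

From mathcomp Require Import all_boot.
From mathcomp Require Import boolp.

Set Implicit Arguments.
Unset Strict Implicit.
Unset Printing Implicit Defensive.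

Definition simple_graph (V : finType) (e : rel V) : Prop :=
  symmetric e /\ irreflexive e.

Definition connected_graph (V : finType) (e : rel V) : Prop :=
  forall x y : V, connect e x y.

(* A path from a to b: the vertex sequence a :: p, consecutive vertices
   adjacent, all vertices distinct, ending at b.  Its length (number of
   edges) is size p. *)
Definition is_path (V : finType) (e : rel V) (a b : V) (p : seq V) : bool :=
  [&& path e a p, uniq (a :: p) & last a p == b].

Definition odd_path (V : finType) (e : rel V) (a b : V) (p : seq V) : bool :=
  is_path e a b p && odd (size p).

Definition interior (V : finType) (a : V) (p : seq V) : seq V :=
  behead (belast a p).

Definition path_edges (V : finType) (a : V) (p : seq V) : seq (V * V) :=
  zip (a :: p) p.

Definition same_edge (V : finType) (u v : V * V) : bool :=
  ((u.1 == v.1) && (u.2 == v.2)) || ((u.1 == v.2) && (u.2 == v.1)).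

Definition edge_disjoint (V : finType) (a : V) (p : seq V) (a' : V) (p' : seq V)
  : bool :=
  all (fun u => all (fun v => ~~ same_edge u v) (path_edges a' p'))
      (path_edges a p).

Definition toi_immersion (V : finType) (e : rel V) (t : nat) : Prop :=
  exists (f : 'I_t -> V) (P : 'I_t -> 'I_t -> seq V),
    [/\ injective f,
        (forall i j : 'I_t, i < j -> odd_path e (f i) (f j) (P i j)),
        (forall i j i' j' : 'I_t, i < j -> i' < j' -> (i, j) != (i', j') ->
            edge_disjoint (f i) (P i j) (f i') (P i' j')) &
        (forall i j k : 'I_t, i < j -> f k \notin interior (f i) (P i j))].

(* toi(G): the maximum t such that G contains a totally odd strong immersion
   of K_t (t <= #|V| by injectivity, and t = 0 always works). *)
Definition toi (V : finType) (e : rel V) : nat :=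
  \max_(t < #|V|.+1 | `[< toi_immersion e t >]) t.

Definition cart_rel (V W : finType) (e : rel V) (f : rel W) : rel (V * W) :=
  fun x y => ((x.1 == y.1) && f x.2 y.2) || ((x.2 == y.2) && e x.1 y.1).

Definition complete_rel (n : nat) : rel 'I_n := fun x y => x != y.
Arguments complete_rel n : clear implicits.

(* Let a, b, c and x, y, z be the terminals of totally odd
   K3-immersions in G and H, and take (a,x), (b,x), (a,y), (b,y) as terminals
   in G □ H.  Four of the six pairs differ in one coordinate only and are joined
   by a copy of an odd path of G or H inside one layer.  The pair (a,x), (b,y)
   is joined by a -> c in layer x, x -> y in layer c and c -> b in layer y, and
   the pair (b,x), (a,y) by x -> z in layer b, b -> a in layer z and z -> y in
   layer a.  Three odd segments make an odd path, and the layers are arranged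
   so that no edge is used twice.

   K3 □ K3 has 18 edges, and an odd path between non-adjacent
   vertices has length at least 3.  For every choice of five terminals this
   bound on the total length of the ten paths is at least 18, with equality
   only if every non-adjacent pair is joined by a path of length exactly 3
   through two non-terminals; an exhaustive search shows that such short paths
   can never be chosen pairwise edge-disjoint. *)

From mathcomp Require Import all_boot.
From mathcomp Require Import boolp.

Set Implicit Arguments.
Unset Strict Implicit.
Unset Printing Implicit Defensive.

(** * Paths and their edges *)

Section PathEdges.
Variable T : finType.
Implicit Types (a b : T) (m p : seq T) (u v : T * T) (L : seq (T * T)).

Definition edges_disjoint L1 L2 :=
  all (fun u => all (fun v => ~~ same_edge u v) L2) L1.

Lemma same_edgeC u v : same_edge u v = same_edge v u.
Proof.
rewrite /same_edge (eq_sym u.1 v.1) (eq_sym u.2 v.2) (eq_sym u.1 v.2) (eq_sym u.2 v.1).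
by rewrite (andbC (v.2 == _)).
Qed.

Lemma same_edge_swapr u v : same_edge u (swap_pair v) = same_edge u v.
Proof. by rewrite /same_edge orbC. Qed.

Lemma edges_disjointC L1 L2 : edges_disjoint L1 L2 = edges_disjoint L2 L1.
Proof.
by apply/allP/allP => dis u Lu; apply/allP => v Lv;
  rewrite same_edgeC; apply: (allP (dis v Lv)).
Qed.

Lemma edges_disjoint_catl L1 L2 L :
  edges_disjoint (L1 ++ L2) L = edges_disjoint L1 L && edges_disjoint L2 L.
Proof. exact: all_cat. Qed.

Lemma edges_disjoint_catr L L1 L2 :
  edges_disjoint L (L1 ++ L2) = edges_disjoint L L1 && edges_disjoint L L2.
Proof. by rewrite !(edges_disjointC L) edges_disjoint_catl. Qed.

Lemma edges_disjoint_rev_swap L1 L2 :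
  edges_disjoint L1 (rev (map swap_pair L2)) = edges_disjoint L1 L2.
Proof.
by apply: eq_all => u; rewrite all_rev all_map; apply: eq_all => v /=; rewrite same_edge_swapr.
Qed.

Lemma path_edges_cat a s t :
  path_edges a (s ++ t) = path_edges a s ++ path_edges (last a s) t.
Proof. by elim: s a => [|y s IH] a //=; rewrite /path_edges /= -IH. Qed.

Lemma path_edges_belast a p : path_edges a p = zip (belast a p) p.
Proof. by elim: p a => [|y p IH] a //=; rewrite /path_edges /= -IH. Qed.

Lemma path_edges_rev a m b :
  path_edges b (rcons (rev m) a) = rev (map swap_pair (path_edges a (rcons m b))).
Proof.
have zipC (s t : seq T) : map swap_pair (zip s t) = zip t s.
  by elim: s t => [|x s IH] [|y t] //=; rewrite IH.
rewrite !path_edges_belast !belast_rcons zipC rev_zip ?size_rcons //.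
by rewrite rev_rcons rev_cons.
Qed.

Lemma path_edges_rel (r : rel T) a p u : path r a p -> u \in path_edges a p -> r u.1 u.2.
Proof.
elim: p a => [|b p IH] a //= /andP [rab rp]; rewrite /path_edges /= inE.
by case/orP => [/eqP -> //|]; apply: IH.
Qed.

Lemma path_edges_loopfree (r : rel T) a p :
  irreflexive r -> path r a p -> {in path_edges a p, forall u, u.1 != u.2}.
Proof. by move=> irr pth u /(path_edges_rel pth); apply: contraTneq => ->; rewrite irr. Qed.

Lemma mem_path_edges a p x y : (x, y) \in path_edges a p -> (x \in a :: p) && (y \in p).
Proof.
elim: p a => [|b p IH] a //=; rewrite /path_edges /= inE => /orP [/eqP [-> ->]|].
  by rewrite !inE !eqxx.
by move/IH => /andP [xp yp]; rewrite in_cons xp orbT /= in_cons yp orbT.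
Qed.

End PathEdges.

Section OddPaths.
Variables (T : finType) (e : rel T).
Implicit Types (a b c t : T) (m p : seq T).

Lemma odd_path_path a b p : odd_path e a b p -> path e a p.
Proof. by case/andP => /and3P []. Qed.

Lemma odd_path_uniq a b p : odd_path e a b p -> uniq (a :: p).
Proof. by case/andP => /and3P []. Qed.

Lemma odd_path_last a b p : odd_path e a b p -> last a p = b.
Proof. by case/andP => /and3P [_ _ /eqP]. Qed.

Lemma odd_path_odd a b p : odd_path e a b p -> odd (size p).
Proof. by case/andP. Qed.

Lemma odd_path_rcons a b p : odd_path e a b p -> p = rcons (interior a p) b.
Proof.
move=> odd_p; rewrite -(odd_path_last odd_p).
by case: p odd_p => [/odd_path_odd //|y p _]; rewrite /interior /= -lastI.
Qed.

Lemma odd_path_ends a b m :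
  odd_path e a b (rcons m b) -> [/\ a != b, a \notin m & b \notin m].
Proof.
move/odd_path_uniq; rewrite cons_uniq rcons_uniq mem_rcons inE negb_or.
by case/andP=> /andP [-> ->] /andP [-> _].
Qed.

Lemma notin_interior a b p t :
  odd_path e a b p -> (t \in p -> t = b) -> t \notin interior a p.
Proof.
move=> odd_p t_end; have p_eq := odd_path_rcons odd_p.
have /odd_path_ends [_ _ bNi] : odd_path e a b (rcons (interior a p) b) by rewrite -p_eq.
apply: contra bNi => t_i; have t_p : t \in p by rewrite p_eq mem_rcons inE t_i orbT.
by rewrite -(t_end t_p).
Qed.

Lemma odd_path_rev a b m :
  symmetric e -> odd_path e a b (rcons m b) -> odd_path e b a (rcons (rev m) a).
Proof.
move=> esym; rewrite /odd_path /is_path => /andP [/and3P [pth uq _] odd_m].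
have -> : b :: rcons (rev m) a = rev (a :: rcons m b) by rewrite rev_cons rev_rcons.
rewrite size_rcons in odd_m.
rewrite rev_uniq uq last_rcons eqxx size_rcons size_rev odd_m !andbT.
have := rev_path e a (rcons m b); rewrite last_rcons belast_rcons rev_cons => ->.
by rewrite (@eq_path _ _ e) // => x y; rewrite /= esym.
Qed.

Lemma odd_path_cat3 a c1 c2 b p1 p2 p3 :
  odd_path e a c1 p1 -> odd_path e c1 c2 p2 -> odd_path e c2 b p3 ->
  uniq (a :: p1 ++ p2 ++ p3) -> odd_path e a b (p1 ++ p2 ++ p3).
Proof.
rewrite /odd_path /is_path => /andP [/and3P [P1 _ /eqP L1] O1]
  /andP [/and3P [P2 _ /eqP L2] O2] /andP [/and3P [P3 _ /eqP L3] O3] ->.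
by rewrite !cat_path P1 L1 P2 !last_cat L1 L2 P3 L3 eqxx !size_cat !oddD O1 O2 O3.
Qed.

Lemma odd_path_mem_last a b p : odd_path e a b p -> b \in p.
Proof. by move/odd_path_rcons->; rewrite mem_rcons mem_head. Qed.

Definition min_odd_length a b := if e a b then 1 else 3.

Lemma odd_path_size a b p : odd_path e a b p -> min_odd_length a b <= size p.
Proof.
move=> odd_p; have := odd_path_odd odd_p; rewrite /min_odd_length; case: ifP => [_|nab].
  by case: p {odd_p}.
case: p odd_p => [|y [|z [|w p]]] //= odd_p _.
by move: nab; rewrite -(odd_path_last odd_p) /=; have /andP [-> _] := odd_path_path odd_p.
Qed.

End OddPaths.

(** * Paths in a Cartesian product *)

Lemma cart_rel_sym (V W : finType) (e : rel V) (f : rel W) :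
  symmetric e -> symmetric f -> symmetric (cart_rel e f).
Proof. by move=> esym fsym u v; rewrite /cart_rel esym fsym !(eq_sym u.1) !(eq_sym u.2). Qed.

Section Layers.
Variables (V W : finType) (e : rel V) (f : rel W).
Hypotheses (eirr : irreflexive e) (firr : irreflexive f).
Implicit Types (a b c g : V) (x y h : W) (p r : seq V) (q : seq W).

Definition layer1 h p : seq (V * W) := [seq (g, h) | g <- p].
Definition layer2 g q : seq (V * W) := [seq (g, w) | w <- q].
Definition edge1 h (u : V * V) : (V * W) * (V * W) := ((u.1, h), (u.2, h)).
Definition edge2 g (u : W * W) : (V * W) * (V * W) := ((g, u.1), (g, u.2)).

Lemma mem_layer1 h p u : (u \in layer1 h p) = (u.2 == h) && (u.1 \in p).
Proof.
case: u => g w /=; apply/mapP/andP => [[g' g'p [-> ->]]|[/eqP -> gp]]; last by exists g.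
by rewrite eqxx.
Qed.

Lemma mem_layer2 g q u : (u \in layer2 g q) = (u.1 == g) && (u.2 \in q).
Proof.
case: u => g' w /=; apply/mapP/andP => [[w' w'q [-> ->]]|[/eqP -> wq]]; last by exists w.
by rewrite eqxx.
Qed.

Lemma path_edges_layer1 h a p :
  path_edges (a, h) (layer1 h p) = map (edge1 h) (path_edges a p).
Proof. by elim: p a => [|g p IH] a //=; rewrite /path_edges /= -IH. Qed.

Lemma path_edges_layer2 g x q :
  path_edges (g, x) (layer2 g q) = map (edge2 g) (path_edges x q).
Proof. by elim: q x => [|w q IH] x //=; rewrite /path_edges /= -IH. Qed.

Lemma last_layer1 h a p : last (a, h) (layer1 h p) = (last a p, h).
Proof. exact: (last_map (fun g => (g, h))). Qed.

Lemma last_layer2 g x q : last (g, x) (layer2 g q) = (g, last x q).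
Proof. exact: (last_map (fun w => (g, w))). Qed.

Lemma uniq_layer1 h p : uniq (layer1 h p) = uniq p.
Proof. by apply: map_inj_uniq => g g' []. Qed.

Lemma uniq_layer2 g q : uniq (layer2 g q) = uniq q.
Proof. by apply: map_inj_uniq => w w' []. Qed.

Lemma odd_path_layer1 h a b p :
  odd_path e a b p -> odd_path (cart_rel e f) (a, h) (b, h) (layer1 h p).
Proof.
rewrite /odd_path /is_path size_map -[_ :: layer1 h p]/(layer1 h (a :: p)) uniq_layer1.
rewrite -[(a, h)]/((fun g => (g, h)) a) /layer1 path_map last_map xpair_eqE eqxx andbT.
by rewrite (@eq_path _ _ e) // => g g'; rewrite /relpre /cart_rel /= firr eqxx andbF.
Qed.

Lemma odd_path_layer2 g x y q :
  odd_path f x y q -> odd_path (cart_rel e f) (g, x) (g, y) (layer2 g q).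
Proof.
rewrite /odd_path /is_path size_map -[_ :: layer2 g q]/(layer2 g (x :: q)) uniq_layer2.
rewrite -[(g, x)]/((fun w => (g, w)) x) /layer2 path_map last_map xpair_eqE eqxx.
by rewrite (@eq_path _ _ f) // => w w'; rewrite /relpre /cart_rel /= eirr eqxx andbF orbF.
Qed.

Lemma odd_path_zigzag a c b x y p q r :
  odd_path e a c p -> odd_path f x y q -> odd_path e c b r ->
  odd_path (cart_rel e f) (a, x) (b, y) (layer1 x p ++ layer2 c q ++ layer1 y r).
Proof.
move=> op oq or.
apply: odd_path_cat3 (odd_path_layer1 x op) (odd_path_layer2 c oq) (odd_path_layer1 y or) _.
have /odd_path_uniq := op; have /odd_path_uniq := oq; have /odd_path_uniq := or.
rewrite !cons_uniq => /andP [cNr ur] /andP [xNq uq] /andP [aNp up].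
have xNy : x != y by apply: contraNneq xNq => ->; apply: odd_path_mem_last oq.
suff: uniq (layer1 x (a :: p) ++ layer2 c q ++ layer1 y r) by [].
rewrite !cat_uniq !uniq_layer1 uniq_layer2 cons_uniq aNp up uq ur !andTb andbT.
apply/andP; split; apply/hasPn => -[g w]; rewrite ?mem_cat !mem_layer1 ?mem_layer2 /=.
  case/orP => [/andP [_ wq]|/andP [/eqP -> _]]; last by rewrite eq_sym (negbTE xNy).
  by apply: contraNN xNq => /andP [/eqP <-].
by case/andP => _ gr; apply: contraNN cNr => /andP [/eqP <-].
Qed.

Section Disjointness.
Implicit Types (L : seq (V * V)) (M : seq (W * W)).

Lemma edges_disjoint_layer1 h L L' :
  edges_disjoint L L' -> edges_disjoint (map (edge1 h) L) (map (edge1 h) L').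
Proof.
move=> dis; apply/allP => _ /mapP [u Lu ->]; apply/allP => _ /mapP [v Lv ->].
by move: (allP (allP dis u Lu) v Lv); rewrite /same_edge /= !xpair_eqE !eqxx !andbT.
Qed.

Lemma edges_disjoint_layer2 g M M' :
  edges_disjoint M M' -> edges_disjoint (map (edge2 g) M) (map (edge2 g) M').
Proof.
move=> dis; apply/allP => _ /mapP [u Mu ->]; apply/allP => _ /mapP [v Mv ->].
by move: (allP (allP dis u Mu) v Mv); rewrite /same_edge /= !xpair_eqE !eqxx.
Qed.

Lemma edges_disjoint_layers1 h h' L L' :
  h != h' -> edges_disjoint (map (edge1 h) L) (map (edge1 h') L').
Proof.
move=> hh'; apply/allP => _ /mapP [u _ ->]; apply/allP => _ /mapP [v _ ->].
by rewrite /same_edge /= !xpair_eqE (negbTE hh') !andbF.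
Qed.

Lemma edges_disjoint_layers2 g g' M M' :
  g != g' -> edges_disjoint (map (edge2 g) M) (map (edge2 g') M').
Proof.
move=> gg'; apply/allP => _ /mapP [u _ ->]; apply/allP => _ /mapP [v _ ->].
by rewrite /same_edge /= !xpair_eqE (negbTE gg').
Qed.

Lemma edges_disjoint_layer12 h g L M :
  {in L, forall u, u.1 != u.2} -> edges_disjoint (map (edge1 h) L) (map (edge2 g) M).
Proof.
move=> loopfree; apply/allP => _ /mapP [u Lu ->]; apply/allP => _ /mapP [v _ ->].
have := loopfree u Lu; rewrite /same_edge /= !xpair_eqE.
by case: (u.1 =P g) => [->|]; case: (u.2 =P g) => [->|]; rewrite ?eqxx ?andbF.
Qed.

End Disjointness.
End Layers.

Lemma cart_rel_swap (V W : finType) (e : rel V) (f : rel W) u v :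
  cart_rel e f (swap_pair u) (swap_pair v) = cart_rel f e u v.
Proof. by rewrite /cart_rel orbC. Qed.

Lemma odd_path_cart_swap (V W : finType) (e : rel V) (f : rel W) u v p :
  odd_path (cart_rel f e) u v p ->
  odd_path (cart_rel e f) (swap_pair u) (swap_pair v) (map swap_pair p).
Proof.
have swap_inj := can_inj (@swap_pairK W V).
rewrite /odd_path /is_path -map_cons (map_inj_uniq swap_inj) size_map last_map.
rewrite (inj_eq swap_inj) path_map (@eq_path _ (relpre swap_pair _) (cart_rel f e)) //.
by move=> ? ?; apply: cart_rel_swap.
Qed.

Lemma odd_path_zigzag2 (V W : finType) (e : rel V) (f : rel W) a b x y z p q r :
  irreflexive e -> irreflexive f ->
  odd_path f x z q -> odd_path e b a p -> odd_path f z y r ->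
  odd_path (cart_rel e f) (b, x) (a, y) (layer2 b q ++ layer1 z p ++ layer2 a r).
Proof.
move=> eirr firr oq op or.
have := odd_path_cart_swap (odd_path_zigzag firr eirr oq op or).
by rewrite !map_cat -!map_comp.
Qed.

(** * A totally odd K4 in the product *)

Section Triangle.
Variables (V : finType) (e : rel V).

Definition odd_triangle (a b c : V) (mab mac mbc : seq V) :=
  [/\ [/\ odd_path e a b (rcons mab b), odd_path e a c (rcons mac c)
        & odd_path e b c (rcons mbc c)],
      [/\ edge_disjoint a (rcons mab b) a (rcons mac c),
          edge_disjoint a (rcons mab b) b (rcons mbc c)
        & edge_disjoint a (rcons mac c) b (rcons mbc c)]
    & [/\ c \notin mab, b \notin mac & a \notin mbc]].

Lemma toi_immersion3_triangle :
  toi_immersion e 3 -> exists a b c mab mac mbc, odd_triangle a b c mab mac mbc.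
Proof.
move=> [t [P [_ odd_P dis_P int_P]]].
pose i0 : 'I_3 := ord0; pose i1 : 'I_3 := lift ord0 ord0; pose i2 : 'I_3 := ord_max.
have o01 := odd_P i0 i1 isT; have o02 := odd_P i0 i2 isT; have o12 := odd_P i1 i2 isT.
exists (t i0), (t i1), (t i2), (interior (t i0) (P i0 i1)),
  (interior (t i0) (P i0 i2)), (interior (t i1) (P i1 i2)).
rewrite /odd_triangle -(odd_path_rcons o01) -(odd_path_rcons o02) -(odd_path_rcons o12).
by split; split; rewrite ?int_P ?dis_P.
Qed.

End Triangle.

Section ProductK4.
Variables (V W : finType) (e : rel V) (f : rel W).
Hypotheses (esym : symmetric e) (eirr : irreflexive e).
Hypotheses (fsym : symmetric f) (firr : irreflexive f).
Variables (a b c : V) (mab mac mbc : seq V) (x y z : W) (nxy nxz nyz : seq W).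
Hypotheses (triG : odd_triangle e a b c mab mac mbc) (triH : odd_triangle f x y z nxy nxz nyz).

Definition K4_terminal (i : 'I_4) : V * W := nth (a, x) [:: (a, x); (b, x); (a, y); (b, y)] i.

Definition K4_path (i j : 'I_4) : seq (V * W) :=
  match val i, val j with
  | 0, 1 => layer1 x (rcons mab b)
  | 0, 2 => layer2 a (rcons nxy y)
  | 0, 3 => layer1 x (rcons mac c) ++ layer2 c (rcons nxy y) ++ layer1 y (rcons (rev mbc) b)
  | 1, 2 => layer2 b (rcons nxz z) ++ layer1 z (rcons (rev mab) a) ++ layer2 a (rcons (rev nyz) y)
  | 1, 3 => layer2 b (rcons nxy y)
  | 2, 3 => layer1 y (rcons mab b)
  | _, _ => [::]
  end.

Lemma K4_terminal_inj : injective K4_terminal.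
Proof.
case: triG triH => [[oab _ _] _ _] [[oxy _ _] _ _].
have [[aNb _ _] [xNy _ _]] := (odd_path_ends oab, odd_path_ends oxy).
move=> i j /eqP; rewrite nth_uniq ?size_tuple ?ltn_ord //; first by move/eqP/val_inj.
by rewrite /= !inE !xpair_eqE (eq_sym b) (negbTE aNb) (negbTE xNy) !andbF.
Qed.

Lemma odd_K4_path (i j : 'I_4) :
  i < j -> odd_path (cart_rel e f) (K4_terminal i) (K4_terminal j) (K4_path i j).
Proof.
case: triG triH => [[oab oac obc] _ _] [[oxy oxz oyz] _ _].
case: i j => [[|[|[|[|?]]]] ?] [[|[|[|[|?]]]] ?] //= _.
- exact: odd_path_layer1.
- exact: odd_path_layer2.
- exact: odd_path_zigzag (odd_path_rev esym obc).
- exact: odd_path_zigzag2 (odd_path_rev esym oab) (odd_path_rev fsym oyz).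
- exact: odd_path_layer2.
- exact: odd_path_layer1.
Qed.

Lemma K4_path_disjoint (i j i' j' : 'I_4) : i < j -> i' < j' -> (i, j) != (i', j') ->
  edge_disjoint (K4_terminal i) (K4_path i j) (K4_terminal i') (K4_path i' j').
Proof.
case: triG triH => [[oab oac obc] [dab_ac dab_bc _] _] [[oxy oxz oyz] [dxy_xz dxy_yz _] _].
have [[aNb _ _] [aNc _ _]] := (odd_path_ends oab, odd_path_ends oac).
have [[bNc _ _] [xNy _ _]] := (odd_path_ends obc, odd_path_ends oxy).
have [[xNz _ _] [yNz _ _]] := (odd_path_ends oxz, odd_path_ends oyz).
have [bNa cNa cNb] : [/\ b != a, c != a & c != b] by rewrite !(eq_sym _ a) (eq_sym c).
have [yNx zNx zNy] : [/\ y != x, z != x & z != y] by rewrite !(eq_sym _ x) (eq_sym z).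
have oba := odd_path_rev esym oab; have ocb := odd_path_rev esym obc.
case: i j i' j' => [[|[|[|[|?]]]] ?] [[|[|[|[|?]]]] ?]
  [[|[|[|[|?]]]] ?] [[|[|[|[|?]]]] ?] //= _ _ _.
all: rewrite /edge_disjoint -/(edges_disjoint _ _) /K4_terminal /K4_path /= ?path_edges_cat.
all: rewrite ?(last_layer1, last_layer2, last_rcons) ?path_edges_layer1 ?path_edges_layer2.
all: rewrite ?edges_disjoint_catl ?edges_disjoint_catr; repeat (apply/andP; split).
all: first
  [ by apply: edges_disjoint_layers1
  | by apply: edges_disjoint_layers2
  | by apply: edges_disjoint_layer1;
       rewrite ?path_edges_rev ?edges_disjoint_rev_swap // edges_disjointC ?edges_disjoint_rev_swap
  | by apply: edges_disjoint_layer2;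
       rewrite ?path_edges_rev ?edges_disjoint_rev_swap // edges_disjointC ?edges_disjoint_rev_swap
  | apply: edges_disjoint_layer12; apply: path_edges_loopfree eirr _;
      apply: odd_path_path; eassumption
  | rewrite edges_disjointC; apply: edges_disjoint_layer12;
      apply: path_edges_loopfree eirr _; apply: odd_path_path; eassumption ].
Qed.

Lemma K4_path_interior (i j k : 'I_4) :
  i < j -> K4_terminal k \notin interior (K4_terminal i) (K4_path i j).
Proof.
move=> ij; apply: notin_interior (odd_K4_path ij) _; rewrite /K4_terminal /K4_path.
case: triG triH => [[oab oac obc] _ [cNab bNac aNbc]] [[oxy oxz oyz] _ [zNxy yNxz xNyz]].
have [[aNb aNab bNab] [aNc aNac cNac]] := (odd_path_ends oab, odd_path_ends oac).
have [[bNc bNbc cNbc] [xNy xNxy yNxy]] := (odd_path_ends obc, odd_path_ends oxy).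
have [[xNz xNxz zNxz] [yNz yNyz zNyz]] := (odd_path_ends oxz, odd_path_ends oyz).
have neqF := (negbTE aNb, negbTE aNc, negbTE bNc, negbTE xNy, negbTE xNz, negbTE yNz).
have memF := (negbTE aNab, negbTE bNab, negbTE cNab, negbTE aNac, negbTE bNac,
  negbTE cNac, negbTE aNbc, negbTE bNbc, negbTE cNbc).
have memF' := (negbTE xNxy, negbTE yNxy, negbTE zNxy, negbTE xNxz, negbTE yNxz,
  negbTE zNxz, negbTE xNyz, negbTE yNyz, negbTE zNyz).
case: i j k ij => [[|[|[|[|?]]]] ?] [[|[|[|[|?]]]] ?] [[|[|[|[|?]]]] ?] //= _.
all: rewrite ?mem_cat ?mem_layer1 ?mem_layer2 /= ?mem_rcons ?inE ?mem_rev.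
all: by rewrite ?neqF ?(eq_sym b a, eq_sym c a, eq_sym c b, eq_sym y x, eq_sym z x, eq_sym z y)
  ?neqF ?memF ?memF' ?andbF ?orbF.
Qed.

Lemma cart_K4_immersion : toi_immersion (cart_rel e f) 4.
Proof.
exists K4_terminal, K4_path; split; [exact: K4_terminal_inj | exact: odd_K4_path |
  exact: K4_path_disjoint | exact: K4_path_interior].
Qed.

End ProductK4.

Lemma cart_toi_immersion4 (V W : finType) (e : rel V) (f : rel W) :
  symmetric e -> irreflexive e -> symmetric f -> irreflexive f ->
  toi_immersion e 3 -> toi_immersion f 3 -> toi_immersion (cart_rel e f) 4.
Proof.
move=> esym eirr fsym firr.
move=> /toi_immersion3_triangle [a [b [c [mab [mac [mbc triG]]]]]].
move=> /toi_immersion3_triangle [x [y [z [nxy [nxz [nyz triH]]]]]].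
exact: (cart_K4_immersion esym eirr fsym firr triG triH).
Qed.

(** * The parameter toi *)

Section Toi.
Variables (V : finType) (e : rel V).

Lemma toi_immersion_le t t' : t' <= t -> toi_immersion e t -> toi_immersion e t'.
Proof.
move=> le_t't [f [P [f_inj odd_P dis_P int_P]]].
pose w := widen_ord le_t't.
exists (fun i => f (w i)), (fun i j => P (w i) (w j)); split.
- by move=> i j /f_inj /(congr1 val) ij; apply: val_inj.
- by move=> i j ij; apply: odd_P.
- by move=> i j i' j' ij ij' neq; apply: dis_P.
- by move=> i j k ij; apply: int_P.
Qed.

Lemma toi_immersion0 : toi_immersion e 0.
Proof.
by exists (fun i : 'I_0 => False_rect V (notF (ltn_ord i))), (fun _ _ => [::]); split; case.
Qed.

Lemma leq_toi t : toi_immersion e t -> t <= toi e.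
Proof.
move=> imm; have [f [_ [f_inj _ _ _]]] := imm.
have lt_t : t < #|V|.+1 by rewrite ltnS -[t]card_ord (leq_card f f_inj).
by apply: (bigmax_sup (Ordinal lt_t)) => //; apply/asboolP.
Qed.

Lemma toiP t : t <= toi e <-> toi_immersion e t.
Proof.
split=> [le_t|/leq_toi //]; apply: toi_immersion_le le_t _.
rewrite /toi; elim/big_rec: _ => [|i m /asboolP imm_i imm_m]; first exact: toi_immersion0.
by rewrite /maxn; case: ltnP.
Qed.

End Toi.

Lemma complete_rel_sym n : symmetric (complete_rel n).
Proof. by move=> i j; rewrite /complete_rel eq_sym. Qed.

Lemma complete_rel_irr n : irreflexive (complete_rel n).
Proof. by move=> i; rewrite /complete_rel eqxx. Qed.

Lemma complete_toi_immersion n : toi_immersion (complete_rel n) n.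
Proof.
exists id, (fun _ j => [:: j]); split=> // [i j lt_ij|i j i' j' lt_ij lt_ij' neq].
- by rewrite /odd_path /is_path /= /complete_rel inE !andbT eqxx neq_ltn lt_ij.
- rewrite /edge_disjoint /path_edges /same_edge /= !andbT negb_or -xpair_eqE neq /=.
  by apply: contraTN lt_ij => /andP [/eqP -> /eqP ->]; rewrite -ltnNge ltnW.
Qed.

(** * No totally odd K5 in K3 □ K3 *)

Section Counting.
Variable T : finType.
Implicit Types (a b : T) (p : seq T) (w : T * T).

Definition path_arcs a p : seq (T * T) :=
  flatten [seq [:: u; swap_pair u] | u <- path_edges a p].

Lemma mem_path_arcs a p w :
  (w \in path_arcs a p) = (w \in path_edges a p) || (swap_pair w \in path_edges a p).
Proof.
rewrite /path_arcs; elim: (path_edges a p) => //= u L IH; rewrite !inE IH.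
have -> : (w == swap_pair u) = (swap_pair w == u).
  by case: {IH} w u => [w1 w2] [u1 u2]; rewrite !xpair_eqE andbC.
by case: (w == u); case: (swap_pair w == u); rewrite ?orbT.
Qed.

Lemma size_path_arcs a p : size (path_arcs a p) = (size p).*2.
Proof. by elim: p a => [|b p IH] a //=; rewrite /path_arcs /= -/(path_arcs b p) IH. Qed.

Lemma uniq_path_arcs a p : uniq (a :: p) -> uniq (path_arcs a p).
Proof.
elim: p a => [|b p IH] a //= /andP [aNbp ubp].
rewrite /path_arcs /= -/(path_arcs b p) inE negb_or in aNbp *.
case/andP: aNbp => aNb aNp; rewrite IH // andbT.
have abN : (a, b) \notin path_edges b p.
  by apply/negP => /mem_path_edges /andP []; rewrite inE (negbTE aNb) (negbTE aNp).
have baN : (b, a) \notin path_edges b p.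
  by apply/negP => /mem_path_edges /andP [_]; rewrite (negbTE aNp).
by rewrite inE !mem_path_arcs /swap_pair /= xpair_eqE (negbTE aNb) (negbTE abN) (negbTE baN).
Qed.

Lemma path_arcs_rel (r : rel T) a p w :
  symmetric r -> path r a p -> w \in path_arcs a p -> r w.1 w.2.
Proof.
move=> rsym pth; rewrite mem_path_arcs => /orP [] /(path_edges_rel pth) //.
by rewrite rsym.
Qed.

Lemma path_arcs_disjoint a p a' p' w :
  edge_disjoint a p a' p' -> w \in path_arcs a p -> w \notin path_arcs a' p'.
Proof.
move=> dis; have same_ww : same_edge w w by rewrite /same_edge !eqxx.
rewrite !mem_path_arcs => /orP [] wp; apply/negP => /orP [] wp';
  move: (allP (allP dis _ wp) _ wp'); rewrite ?same_edge_swapr 1?same_edgeC ?same_edge_swapr.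
all: by rewrite same_ww.
Qed.

Lemma edge_disjoint_paths_size (r : rel T) (U : seq (T * T)) (I : eqType) (s : seq I)
    (a : I -> T) (P : I -> seq T) :
  symmetric r -> (forall u v, r u v -> (u, v) \in U) -> uniq s ->
  {in s, forall i, path r (a i) (P i) && uniq (a i :: P i)} ->
  {in s &, forall i j, i != j -> edge_disjoint (a i) (P i) (a j) (P j)} ->
  (\sum_(i <- s) size (P i)).*2 <= size U.
Proof.
move=> rsym rU uniq_s paths_s dis_s.
pose arcs s' := flatten [seq path_arcs (a i) (P i) | i <- s'].
have -> : (\sum_(i <- s) size (P i)).*2 = size (arcs s).
  elim: (s) => [|i s' IH]; first by rewrite big_nil.
  by rewrite big_cons doubleD IH /arcs /= size_cat size_path_arcs.
apply: uniq_leq_size; last first.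
  move=> w /flattenP [_ /mapP [i si ->]] w_i.
  have /andP [pth _] := paths_s i si.
  by rewrite [w]surjective_pairing; apply/rU/(path_arcs_rel rsym pth).
elim: s uniq_s paths_s dis_s => //= i s IH /andP [iNs uniq_s] paths_s dis_s.
rewrite cat_uniq IH ?andbT; first last.
- by move=> j k sj sk; apply: dis_s; rewrite inE ?sj ?sk orbT.
- by move=> j sj; apply: paths_s; rewrite inE sj orbT.
- by [].
have /andP [_ uniq_i] := paths_s i (mem_head i s); rewrite uniq_path_arcs //=.
apply/hasPn => w /flattenP [_ /mapP [j sj ->]] w_j.
apply: (path_arcs_disjoint _ w_j); apply: dis_s; rewrite ?inE ?sj ?eqxx ?orbT //.
by apply: contraNneq iNs => <-.
Qed.

End Counting.

Lemma sum_leq_eq (I : eqType) (s : seq I) (F G : I -> nat) :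
  {in s, forall i, F i <= G i} -> \sum_(i <- s) G i <= \sum_(i <- s) F i ->
  {in s, forall i, G i = F i}.
Proof.
move=> le_FG le_sum i si; apply/eqP; rewrite eqn_leq le_FG // andbT -subn_eq0.
have : \sum_(j <- s | j \in s) (G j - F j) == 0.
  by rewrite sumnB -?big_seq ?subn_eq0 // => j /le_FG.
by rewrite sum_nat_seq_eq0 => /allP /(_ i si); rewrite si.
Qed.

Definition ltpairs n : seq (nat * nat) :=
  [seq ij <- [seq (i, j) | i <- iota 0 n, j <- iota 0 n] | ij.1 < ij.2].

Lemma mem_ltpairs n ij : (ij \in ltpairs n) = (ij.1 < ij.2 < n).
Proof.
case: ij => i j; rewrite mem_filter /=; case: ltnP => //= lt_ij.
apply/allpairsP/idP => [[[i' j'] [_ j'n [_ ->]]]|lt_jn].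
  by move: j'n; rewrite mem_iota add0n.
by exists (i, j); rewrite !mem_iota add0n lt_jn (ltn_trans lt_ij).
Qed.

Lemma uniq_ltpairs n : uniq (ltpairs n).
Proof. by rewrite filter_uniq // allpairs_uniq ?iota_uniq // => -[? ?] [? ?] _ _ /= [-> ->]. Qed.

Section SeqImmersion.
Variables (T : finType) (e : rel T) (x0 : T).

(* Terminals and paths indexed by natural numbers, so that candidate terminals
   can be enumerated by computation. *)
Definition seq_immersion (s : seq T) (Q : nat -> nat -> seq T) :=
  [/\ uniq s,
      {in ltpairs (size s), forall ij,
         odd_path e (nth x0 s ij.1) (nth x0 s ij.2) (Q ij.1 ij.2)},
      {in ltpairs (size s) &, forall ij kl, ij != kl ->
         edge_disjoint (nth x0 s ij.1) (Q ij.1 ij.2) (nth x0 s kl.1) (Q kl.1 kl.2)}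
    & {in ltpairs (size s), forall ij,
         all (fun t => t \notin interior (nth x0 s ij.1) (Q ij.1 ij.2)) s}].

Lemma toi_immersion_seq n :
  toi_immersion e n.+1 -> exists s Q, size s = n.+1 /\ seq_immersion s Q.
Proof.
move=> [f [P [f_inj odd_P dis_P int_P]]].
pose s := [seq f (inord k) | k <- iota 0 n.+1].
have nth_s k : k < n.+1 -> nth x0 s k = f (inord k).
  by move=> lt_k; rewrite (nth_map 0) ?size_iota // nth_iota.
have size_s : size s = n.+1 by rewrite size_map size_iota.
exists s, (fun i j => P (inord i) (inord j)); rewrite /seq_immersion size_s; split=> //; split.
- rewrite map_inj_in_uniq ?iota_uniq // => i j; rewrite !mem_iota /= => lt_i lt_j.
  by move/f_inj/(congr1 val); rewrite /= !inordK.
- move=> [i j]; rewrite mem_ltpairs /= => /andP [lt_ij lt_j]; have lt_i := ltn_trans lt_ij lt_j.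
  by rewrite !nth_s //; apply: odd_P; rewrite !inordK.
- move=> [i j] [k l]; rewrite !mem_ltpairs /= => /andP [lt_ij lt_j] /andP [lt_kl lt_l] ijNkl.
  have [lt_i lt_k] := (ltn_trans lt_ij lt_j, ltn_trans lt_kl lt_l).
  rewrite !nth_s //; apply: dis_P; rewrite ?inordK //; apply: contra ijNkl.
  rewrite !xpair_eqE => /andP [/eqP/(congr1 val) + /eqP/(congr1 val)].
  by rewrite /= !inordK // => -> ->; rewrite !eqxx.
- move=> [i j]; rewrite mem_ltpairs => /andP [lt_ij lt_j]; have lt_i := ltn_trans lt_ij lt_j.
  by apply/allP => _ /mapP [k _ ->]; rewrite nth_s //; apply: int_P; rewrite !inordK.
Qed.

End SeqImmersion.

Section DisjointChoice.
Variable T : finType.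

(* [if] rather than [&&]: [vm_compute] evaluates both arguments of [&&]. *)
Fixpoint disjoint_choice (cands : seq (seq (T * seq T))) (chosen : seq (T * seq T)) :=
  if cands is c :: cands' then
    has (fun q => if all (fun q' => edge_disjoint q.1 q.2 q'.1 q'.2) chosen
                  then disjoint_choice cands' (q :: chosen) else false) c
  else true.

Lemma disjoint_choice_complete (I : eqType) (s : seq I) (cand : I -> seq (T * seq T))
    (pick : I -> T * seq T) chosen :
  uniq s -> {in s, forall i, pick i \in cand i} ->
  {in s &, forall i j, i != j -> edge_disjoint (pick i).1 (pick i).2 (pick j).1 (pick j).2} ->
  {in s, forall i, all (fun q => edge_disjoint (pick i).1 (pick i).2 q.1 q.2) chosen} ->
  disjoint_choice (map cand s) chosen.
Proof.
elim: s chosen => //= i s IH chosen /andP [iNs uniq_s] pick_cand pick_dis pick_chosen.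
apply/hasP; exists (pick i); first exact/pick_cand/mem_head.
rewrite pick_chosen ?mem_head //; apply: IH => // [j sj|j k sj sk|j sj].
- by apply: pick_cand; rewrite inE sj orbT.
- by apply: pick_dis; rewrite inE ?sj ?sk orbT.
rewrite /= pick_chosen ?inE ?sj ?orbT // andbT.
by apply: pick_dis; rewrite ?inE ?eqxx ?sj ?orbT //; apply: contraNneq iNs => <-.
Qed.

End DisjointChoice.

Section Paths3.
Variable T : finType.
Implicit Types (a b : T) (mids : seq T).

Definition paths3 (e : rel T) mids a b : seq (T * seq T) :=
  [seq (a, [:: xy.1; xy.2; b]) | xy <- [seq (x, y) | x <- mids, y <- mids]
     & [&& e a xy.1, e xy.1 xy.2 & e xy.2 b]].

Lemma mem_paths3 (e : rel T) mids a b x y :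
  x \in mids -> y \in mids -> path e a [:: x; y; b] -> (a, [:: x; y; b]) \in paths3 e mids a b.
Proof.
move=> x_mids y_mids /and4P [ax xy yb _].
by apply/mapP; exists (x, y) => //; rewrite mem_filter /= ax xy yb; apply: allpairs_f.
Qed.

End Paths3.

Fixpoint words (T : Type) (xs : seq T) n : seq (seq T) :=
  if n is n'.+1 then [seq x :: w | x <- xs, w <- words xs n'] else [:: [::]].

Lemma mem_words (T : eqType) (xs : seq T) w : all (mem xs) w -> w \in words xs (size w).
Proof.
by elim: w => [|x w IH] /= ; rewrite ?mem_seq1 // => /andP [xs_x /IH w_xs]; apply: allpairs_f.
Qed.

Definition K3K3 : rel ('I_3 * 'I_3) := cart_rel (complete_rel 3) (complete_rel 3).

(* Explicit ordinals: [enum 'I_3] does not reduce under [vm_compute], since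
   [insub] goes through the opaque [idP]. *)
Definition ord3 : seq 'I_3 := [:: @Ordinal 3 0 isT; @Ordinal 3 1 isT; @Ordinal 3 2 isT].
Definition K3K3_vertices : seq ('I_3 * 'I_3) := [seq (i, j) | i <- ord3, j <- ord3].
Definition K3K3_arcs : seq (('I_3 * 'I_3) * ('I_3 * 'I_3)) :=
  [seq uv <- [seq (u, v) | u <- K3K3_vertices, v <- K3K3_vertices] | K3K3 uv.1 uv.2].

(* [K3K3] with the comparisons done on [nat], which [vm_compute] evaluates much
   faster. *)
Definition K3K3_adj (u v : 'I_3 * 'I_3) : bool :=
  if eqn u.1 v.1 then ~~ eqn u.2 v.2 else eqn u.2 v.2.

Lemma K3K3_adjE : K3K3 =2 K3K3_adj.
Proof. by move=> [[[|[|[|?]]] ?] [[|[|[|?]]] ?]] [[[|[|[|?]]] ?] [[|[|[|?]]] ?]]. Qed.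

Lemma mem_K3K3_vertices v : v \in K3K3_vertices.
Proof. by case: v => -[[|[|[|?]]] ?] [[|[|[|?]]] ?]. Qed.

Lemma mem_K3K3_arcs u v : K3K3 u v -> (u, v) \in K3K3_arcs.
Proof. by move=> Kuv; rewrite mem_filter Kuv; apply: allpairs_f; apply: mem_K3K3_vertices. Qed.

Lemma size_K3K3_arcs : size K3K3_arcs = 36.
Proof. by vm_compute. Qed.

Definition K3K3_cost (s : seq ('I_3 * 'I_3)) : nat :=
  sumn [seq min_odd_length K3K3_adj (nth (ord0, ord0) s ij.1) (nth (ord0, ord0) s ij.2)
       | ij <- ltpairs 5].

Definition K3K3_detours (s : seq ('I_3 * 'I_3)) : seq (seq (('I_3 * 'I_3) * seq ('I_3 * 'I_3))) :=
  let mids := [seq v <- K3K3_vertices | v \notin s] in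
  [seq paths3 K3K3_adj mids (nth (ord0, ord0) s ij.1) (nth (ord0, ord0) s ij.2)
  | ij <- ltpairs 5 & ~~ K3K3_adj (nth (ord0, ord0) s ij.1) (nth (ord0, ord0) s ij.2)].

(* [K3K3] has 18 edges; as in [disjoint_choice], the [if]s spare [vm_compute]
   useless evaluations. *)
Definition K3K3_K5_free (s : seq ('I_3 * 'I_3)) : bool :=
  if uniq s then
    let cost := K3K3_cost s in
    if 18 < cost then true else
    if cost == 18 then ~~ disjoint_choice (K3K3_detours s) [::] else false
  else true.

Lemma all_K3K3_K5_free : all K3K3_K5_free (words K3K3_vertices 5).
Proof. by vm_compute. Qed.

Section K3K3Immersion.
Variables (s : seq ('I_3 * 'I_3)) (Q : nat -> nat -> seq ('I_3 * 'I_3)).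
Hypotheses (size_s : size s = 5) (immQ : seq_immersion K3K3 (ord0, ord0) s Q).
Local Notation t := (nth (ord0, ord0) s).

Lemma K3K3_paths_size : \sum_(ij <- ltpairs 5) size (Q ij.1 ij.2) <= 18.
Proof.
case: immQ; rewrite size_s => _ odd_Q dis_Q _.
have K3K3_sym : symmetric K3K3 by apply: cart_rel_sym; apply: complete_rel_sym.
rewrite -leq_double -[18.*2]/36 -size_K3K3_arcs.
apply: (edge_disjoint_paths_size (a := fun ij => t ij.1)) K3K3_sym mem_K3K3_arcs _ _ dis_Q.
  exact: uniq_ltpairs.
by move=> ij /odd_Q odd_ij; rewrite (odd_path_path odd_ij) (odd_path_uniq odd_ij).
Qed.

Lemma K3K3_cost_le : K3K3_cost s <= \sum_(ij <- ltpairs 5) size (Q ij.1 ij.2).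
Proof.
case: immQ; rewrite size_s => _ odd_Q _ _.
rewrite /K3K3_cost sumnE big_map big_seq [leqRHS]big_seq.
by apply: leq_sum => ij /odd_Q /odd_path_size; rewrite /min_odd_length K3K3_adjE.
Qed.

Lemma K3K3_disjoint_detours : K3K3_cost s = 18 -> disjoint_choice (K3K3_detours s) [::].
Proof.
move=> cost18; case: immQ; rewrite size_s => _ odd_Q dis_Q int_Q.
have size_Q : {in ltpairs 5, forall ij,
    size (Q ij.1 ij.2) = min_odd_length K3K3_adj (t ij.1) (t ij.2)}.
  apply: sum_leq_eq => [ij /odd_Q /odd_path_size|]; first by rewrite /min_odd_length K3K3_adjE.
  by rewrite (leq_trans K3K3_paths_size) // -cost18 /K3K3_cost sumnE big_map.
(* Not a rewrite with [mem_filter]: the membership goals produced below are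
   stated over a different, though convertible, [eqType] instance. *)
have mid_mem v : v \notin s -> v \in [seq v <- K3K3_vertices | v \notin s].
  by move=> vNs; rewrite mem_filter vNs mem_K3K3_vertices.
apply: (disjoint_choice_complete (pick := fun ij => (t ij.1, Q ij.1 ij.2))) => //.
- exact/filter_uniq/uniq_ltpairs.
- move=> ij; rewrite mem_filter => /andP [nadj ij5].
  move: (size_Q ij ij5) (odd_Q ij ij5) (int_Q ij ij5) (odd_path_last (odd_Q ij ij5)).
  rewrite /min_odd_length (negbTE nadj); case: (Q ij.1 ij.2) => [|x [|y [|z [|]]]] // _.
  move=> + + z_end; rewrite /= in z_end; rewrite z_end => odd_ij int_ij.
  have [xNs yNs] : x \notin s /\ y \notin s.
    by split; apply/negP => /(allP int_ij); rewrite /interior /= !inE eqxx ?orbT.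
  apply: mem_paths3; [exact: mid_mem xNs | exact: mid_mem yNs |].
  by rewrite -(eq_path K3K3_adjE); apply: odd_path_path odd_ij.
- move=> ij kl; rewrite mem_filter => /andP [_ ij5]; rewrite mem_filter => /andP [_ kl5].
  exact: dis_Q.
Qed.

End K3K3Immersion.

Lemma K3K3_no_K5 : ~ toi_immersion K3K3 5.
Proof.
case/(@toi_immersion_seq _ K3K3 (ord0, ord0)) => s [Q [size_s immQ]].
have /allP /(_ s) := all_K3K3_K5_free.
rewrite -size_s mem_words; last by apply/allP => v _; apply: mem_K3K3_vertices.
have [uniq_s _ _ _] := immQ.
have not_gt18 : 18 < K3K3_cost s = false.
  by rewrite ltnNge (leq_trans (K3K3_cost_le size_s immQ) (K3K3_paths_size size_s immQ)).
rewrite /K3K3_K5_free uniq_s => /(_ isT); cbv zeta iota; rewrite not_gt18.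
by case: eqP => // /(K3K3_disjoint_detours size_s immQ) ->.
Qed.

Theorem mainTheorem6 :
  (forall (V : finType) (e : rel V) (W : finType) (f : rel W),
      simple_graph e -> simple_graph f ->
      connected_graph e -> connected_graph f ->
      toi e = 3 -> toi f = 3 ->
      4 <= toi (cart_rel e f))
  /\ toi (cart_rel (complete_rel 3) (complete_rel 3)) = 4.
Proof.
have toi_cart4 (V W : finType) (e : rel V) (f : rel W) :
    simple_graph e -> simple_graph f -> toi_immersion e 3 -> toi_immersion f 3 ->
    4 <= toi (cart_rel e f).
  by move=> [esym eirr] [fsym firr] He Hf; apply/toiP/cart_toi_immersion4.
split=> [V e W f Se Sf _ _ He Hf|].
  by apply: toi_cart4 => //; apply/toiP; rewrite ?He ?Hf.
have K3_simple : simple_graph (complete_rel 3).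
  by split; [apply: complete_rel_sym | apply: complete_rel_irr].
have toi_K3K3 : 4 <= toi (cart_rel (complete_rel 3) (complete_rel 3)).
  by apply: toi_cart4 => //; apply: complete_toi_immersion.
apply/eqP; rewrite eqn_leq toi_K3K3 andbT leqNgt.
by apply/negP => /toiP /K3K3_no_K5.
Qed.
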